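(* Let $H$ be a finite simple graph whose vertex set can be partitioned into anticliques (independent sets) of sizes $x_1,x_2,\ldots,x_k$. Then $$\rho(H) \geq \sum_{i=1}^k \frac{x_i(x_i + 1)}{2}.$$
   Context: All graphs are finite and simple. A coloring means a proper vertex coloring; an induced subgraph is rainbow if all its vertices have pairwise different colors. For a graph $H$, $\rho(H)$ is the least number $m$ such that there exists a graph $G$ on $m$ vertices such that every proper vertex coloring of $G$ contains a rainbow induced subgraph isomorphic to $H$. An anticlique is a set of pairwise non-adjacent vertices. *)

From mathcomp Require Import all_boot.
Set Implicit Arguments. Unset Strict Implicit. Unset Printing Implicit Defensive.

Definition simple_graph (V : finType) (e : rel V) : Prop :=
  irreflexive e /\ symmetric e.

Definition proper_coloring (V : finType) (e : rel V) (c : V -> nat) : Prop :=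
  forall u v, e u v -> c u != c v.

Definition induced_embedding (VH VG : finType) (eH : rel VH) (eG : rel VG)
  (f : VH -> VG) : Prop :=
  injective f /\ forall u v, eH u v = eG (f u) (f v).

Definition has_rainbow_induced_copy (VH VG : finType) (eH : rel VH)
  (eG : rel VG) (c : VG -> nat) : Prop :=
  exists f : VH -> VG, induced_embedding eH eG f /\ injective (fun x => c (f x)).

Definition rainbow_forcing (VH VG : finType) (eH : rel VH) (eG : rel VG) : Prop :=
  forall c : VG -> nat, proper_coloring eG c -> has_rainbow_induced_copy eH eG c.

Definition anticlique_partition (VH : finType) (eH : rel VH) (k : nat)
  (p : VH -> 'I_k) : Prop :=
  forall u v, eH u v -> p u != p v.

From mathcomp Require Import all_boot zify.
Set Implicit Arguments. Unset Strict Implicit. Unset Printing Implicit Defensive.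

(* Colour G greedily: class 0 is a maximum anticlique, class j+1 is a maximum
   anticlique of what remains.  Then any anticlique all of whose colours are at
   least j has at most as many vertices as class j.  Take a rainbow induced copy
   of H and list the vertices of one part of H by increasing colour; the
   vertices from the r-th onward form an anticlique of G with colours at least
   that of the r-th, so the class of the r-th colour has at least x - r + 1
   vertices.  As the colours of the copy are distinct, these classes are
   disjoint, and summing over r and over the parts gives the bound. *)

Lemma card_set_sum (T : finType) (Q : pred T) : #|[set w | Q w]| = \sum_w Q w.
Proof. by rewrite -sum1dep_card big_mkcond; apply: eq_bigr => w _; case: (Q w). Qed.

Lemma card_sep_sum (T : finType) (P : {set T}) (Q : pred T) :
  #|[set w in P | Q w]| = \sum_(w in P) Q w.
Proof.
by rewrite card_set_sum [RHS]big_mkcond; apply: eq_bigr => w _; case: (w \in P).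
Qed.

Lemma sum_card_geq_inj (T : finType) (g : T -> nat) (P : {set T}) :
  injective g ->
  \sum_(u in P) #|[set w in P | g u <= g w]| = (#|P| * #|P|.+1) %/ 2.
Proof.
move=> g_inj.
suff <- : (\sum_(u in P) #|[set w in P | g u <= g w]|) * 2 = #|P| * #|P|.+1.
  by rewrite mulnK.
under eq_bigr do rewrite card_sep_sum.
rewrite muln2 -addnn {2}(exchange_big) /= -big_split /= -sum_nat_const.
apply: eq_bigr => u uP; rewrite -big_split /=.
have comparable w : (g u <= g w) + (g w <= g u) = 1 + (w == u).
  have [lt_uw|lt_wu|eq_uw] := ltngtP (g u) (g w).
  - by case: eqP => // wu; rewrite wu ltnn in lt_uw.
  - by case: eqP => // wu; rewrite wu ltnn in lt_wu.
  - by rewrite (g_inj _ _ eq_uw) eqxx.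
under eq_bigr do rewrite comparable.
rewrite big_split /= sum1_card -addn1 -card_sep_sum -(cards1 u); congr (_ + _).
by apply: eq_card => w; rewrite !inE andbC; case: eqP => // ->.
Qed.

Lemma sum_card_fibers_inj (T V : finType) (X : eqType) (c : V -> X) (g : T -> X) :
  injective g -> \sum_u #|[set v | c v == g u]| <= #|V|.
Proof.
move=> g_inj; rewrite -sum1_card.
under eq_bigr do rewrite card_set_sum.
rewrite exchange_big /=; apply: leq_sum => v _.
rewrite -card_set_sum; apply/card_le1_eqP => u w; rewrite !inE => /eqP cu /eqP cw.
by apply: g_inj; rewrite -cu -cw.
Qed.

Definition independent (V : finType) (e : rel V) (S : {set V}) :=
  [forall u in S, forall v in S, ~~ e u v].

Lemma independent_embedding_part (VH VG : finType) (eH : rel VH) (eG : rel VG)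
    (f : VH -> VG) (k : nat) (p : VH -> 'I_k) (i : 'I_k) (X : {set VH}) :
  induced_embedding eH eG f -> anticlique_partition eH p ->
  X \subset [set w | p w == i] -> independent eG (f @: X).
Proof.
move=> [_ f_edge] p_anti /subsetP X_part.
apply/forall_inP => _ /imsetP [u uX ->]; apply/forall_inP => _ /imsetP [w wX ->].
rewrite -f_edge; apply/negP => /p_anti.
by move: (X_part u uX) (X_part w wX); rewrite !inE => /eqP -> /eqP ->; rewrite eqxx.
Qed.

Section GreedyColoring.

Variables (V : finType) (e : rel V).
Hypothesis e_irr : irreflexive e.

Definition greedy_coloring (W : {set V}) (c : V -> nat) :=
  {in W &, forall u v, e u v -> c u != c v} /\
  forall j (S : {set V}), independent e S -> S \subset W ->
    {in S, forall v, j <= c v} -> #|S| <= #|[set v in W | c v == j]|.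

Lemma greedy_coloring_shift (W A : {set V}) (c : V -> nat) :
  A \subset W -> independent e A ->
  (forall S : {set V}, S \subset W -> independent e S -> #|S| <= #|A|) ->
  greedy_coloring (W :\: A) c ->
  greedy_coloring W (fun v => if v \in A then 0 else (c v).+1).
Proof.
move=> AW A_ind A_max [c_proper c_greedy]; split.
  move=> u v uW vW euv; case uA: (u \in A); case vA: (v \in A) => //.
  - by move/forall_inP: A_ind => /(_ u uA) /forall_inP /(_ v vA); rewrite euv.
  - by apply: c_proper; rewrite // inE ?uA ?vA.
move=> [|j] S S_ind SW S_ge.
  apply: leq_trans (A_max S SW S_ind) (subset_leq_card _).
  by apply/subsetP => v vA; rewrite inE vA (subsetP AW).
have S_notA v : v \in S -> v \notin A by move/S_ge; case: (v \in A).
have SWA : S \subset W :\: A.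
  by apply/subsetP => v vS; rewrite inE S_notA // (subsetP SW).
apply: leq_trans (c_greedy j S S_ind SWA _) (subset_leq_card _).
  by move=> v vS; move: (S_ge v vS); rewrite (negbTE (S_notA v vS)).
apply/subsetP => v; rewrite !inE => /andP[/andP[vA vW] /eqP <-].
by rewrite vW (negbTE vA) eqxx.
Qed.

Lemma greedy_coloring_exists (W : {set V}) : exists c, greedy_coloring W c.
Proof.
move: {2}#|W| (leqnn #|W|) => n; elim: n W => [|n IH] W W_le.
  exists (fun=> 0); move: W_le; rewrite leqn0 cards_eq0 => /eqP ->.
  by split=> [u|j S _]; rewrite ?inE // subset0 => /eqP -> _; rewrite cards0.
pose indep_in (A : {set V}) := (A \subset W) && independent e A.
have indep0 : indep_in set0.
  by rewrite /indep_in sub0set; apply/forall_inP => u; rewrite inE.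
case: (arg_maxnP (fun A : {set V} => #|A|) indep0) => A /andP[AW A_ind] A_max.
have [W0|[x xW]] := set_0Vmem W.
  by apply: IH; rewrite W0 cards0.
have A_pos : 0 < #|A|.
  rewrite -(cards1 x); apply: A_max; rewrite /indep_in sub1set xW.
  by apply/forall_inP => u /set1P ->; apply/forall_inP => v /set1P ->; rewrite e_irr.
have [c c_greedy] : exists c, greedy_coloring (W :\: A) c.
  by apply: IH; move: (cardsID A W) W_le; rewrite (setIidPr AW); lia.
exists (fun v => if v \in A then 0 else (c v).+1).
by apply: greedy_coloring_shift => // S SW S_ind; apply: A_max; rewrite /indep_in SW.
Qed.

End GreedyColoring.

Theorem theorem2p1 (VH : finType) (eH : rel VH) (k : nat) (p : VH -> 'I_k) :
  simple_graph eH ->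
  anticlique_partition eH p ->
  forall (VG : finType) (eG : rel VG),
    simple_graph eG ->
    rainbow_forcing eH eG ->
    (\sum_(i < k) (#|[set u | p u == i]| * #|[set u | p u == i]|.+1) %/ 2
      <= #|VG|)%N.
Proof.
move=> _ p_anti VG eG [eG_irr _] forcing.
have [c [c_proper c_greedy]] := greedy_coloring_exists eG_irr [set: VG].
have [f [f_emb g_inj]] : has_rainbow_induced_copy eH eG c.
  by apply: forcing => u v; apply: c_proper; rewrite inE.
set g := fun u => c (f u) in g_inj.
pose upper u := [set w | (p w == p u) && (g u <= g w)].
have upper_le u : #|upper u| <= #|[set v | c v == g u]|.
  have -> : [set v | c v == g u] = [set v in [set: VG] | c v == g u].
    by apply/setP => v; rewrite !inE.
  rewrite -(card_imset _ f_emb.1); apply: c_greedy.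
  - apply: (independent_embedding_part (i := p u) f_emb p_anti).
    by apply/subsetP => w; rewrite !inE => /andP[].
  - exact: subsetT.
  - by move=> v /imsetP [w]; rewrite inE => /andP[_ g_le] ->.
apply: leq_trans (sum_card_fibers_inj c g_inj).
apply: (@leq_trans (\sum_u #|upper u|)); last by apply: leq_sum => u _.
rewrite (partition_big p predT) //=; apply: eq_leq; apply: eq_bigr => i _.
rewrite -(sum_card_geq_inj _ g_inj) big_mkcond [RHS]big_mkcond /=.
apply: eq_bigr => u _; rewrite inE; case: eqP => // pu.
by apply: eq_card => w; rewrite !inE pu.
Qed.
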